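(* Let $\alpha\in(0,\infty)$, $\zeta_1=1$, $\zeta_2=\zeta_3=\mathrm{sech}(2\alpha)$, $\nu=\tanh(2\alpha)$ (the $k=1$ case of the parameterization $\zeta_2=\zeta_1\mathrm{dn}(2\alpha,k)$, $\zeta_3=\zeta_1\mathrm{cn}(2\alpha,k)$, in which the periodic profile degenerates to the hyperbolic profile $\phi(x)=\frac{e^{2z}+e^{-2z}+2[1-\sinh^2(2\alpha)]\mathrm{sech}(2\alpha)}{e^{2z}+e^{-2z}+2\cosh(2\alpha)}$, $z=\tanh(2\alpha)x$). Then the kink breather described in the context, taken for $k=1$, is equivalent up to the translational parameters in $\xi$ and $\eta$ to the two-soliton solution $$u(x,t)=\frac{\sinh(\eta+2\alpha)e^{-2z}+\sinh(\eta-2\alpha)e^{2z}+2\sinh(\eta)(1-\sinh^2(2\alpha))\mathrm{sech}(2\alpha)}{\cosh(\eta+2\alpha)e^{-2z}+\cosh(\eta-2\alpha)e^{2z}+2\cosh(\eta)\cosh(2\alpha)},$$ where $\xi=x+2t+4\,\mathrm{sech}^2(2\alpha)\,t$, $\eta=x+2t$, and $z=\tanh(2\alpha)\xi$.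
   Context: The kink breather: for $0<\zeta_3<\zeta_2<\zeta_1$, $b=4\zeta_1\zeta_2\zeta_3$, $c=2(\zeta_1^2+\zeta_2^2+\zeta_3^2)$, $\nu=\sqrt{\zeta_1^2-\zeta_3^2}$, modulus $k=\sqrt{(\zeta_1^2-\zeta_2^2)/(\zeta_1^2-\zeta_3^2)}$, $\alpha$ with $\mathrm{sn}(\alpha)=\sqrt{(\zeta_1-\zeta_3)/(\zeta_1+\zeta_2)}$, profile $\phi(x)=\frac{2(\zeta_1+\zeta_3)(\zeta_2+\zeta_3)}{(\zeta_1+\zeta_3)-(\zeta_1-\zeta_2)\mathrm{sn}^2(\nu x)}-\zeta_1-\zeta_2-\zeta_3$, $s_0=\zeta_2+\zeta_3-\zeta_1+2\nu Z(\alpha)$, $c_b=c-b/s_0$, $\xi=x+ct$, $\eta=s_0(x+c_bt)$, it is the solution of $u_t-6u^2u_x+u_{xxx}=0$ $$u=\frac{4\phi(\xi)\Theta^2(\nu\xi+\alpha)+e^{2(\eta+\eta_0)}\Theta^2(\nu\xi-\alpha)(2\phi\phi'-\phi''-b)(\xi)}{4\Theta^2(\nu\xi+\alpha)+e^{2(\eta+\eta_0)}\Theta^2(\nu\xi-\alpha)(c+2\phi'-2\phi^2)(\xi)},\quad \eta_0\in\mathbb{R}.$$ Here $K=K(k)$, $K'=K(\sqrt{1-k^2})$, $q=e^{-\pi K'/K}$, $\Theta(x)=\theta_4(\pi x/(2K))$ with $\theta_4(y)=1+2\sum_{n\ge1}(-1)^nq^{n^2}\cos(2ny)$, and $Z=\Theta'/\Theta$.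 The ''$k=1$'' case refers to the degeneration of these elliptic expressions to hyperbolic ones as $k\to1$ (with $\zeta_1=1$, $\alpha$ fixed). *)

From Stdlib Require Import Reals.
From Coquelicot Require Import Coquelicot.
Open Scope R_scope.

Definition sech (x : R) : R := / cosh x.

(** * The kink breather of the context, degenerated to k = 1.
    In the limit k -> 1 the elliptic objects degenerate as
      sn(y,k) -> tanh y,   Z(y) -> tanh y,   Theta(y) -> Theta(0) * cosh y;
    the constant factor Theta(0)^2 cancels between numerator and
    denominator of the kink-breather formula (which is homogeneous of
    degree 2 in Theta), so we may take Theta := cosh. *)

Section KB.
Variables (z1 z2 z3 nu al : R).

Definition kb_b : R := 4 * z1 * z2 * z3.
Definition kb_c : R := 2 * (z1 ^ 2 + z2 ^ 2 + z3 ^ 2).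

Definition kb_phi (x : R) : R :=
  2 * (z1 + z3) * (z2 + z3) / ((z1 + z3) - (z1 - z2) * (tanh (nu * x)) ^ 2)
  - z1 - z2 - z3.

Definition kb_s0 : R := z2 + z3 - z1 + 2 * nu * tanh al.
Definition kb_cb : R := kb_c - kb_b / kb_s0.

Definition kb_Theta (y : R) : R := cosh y.

Definition kb_formula (eta0 xi eta : R) : R :=
  let p   := kb_phi xi in
  let p1  := Derive kb_phi xi in
  let p2  := Derive (Derive kb_phi) xi in
  let Tp  := (kb_Theta (nu * xi + al)) ^ 2 in
  let Tm  := (kb_Theta (nu * xi - al)) ^ 2 in
  let E   := exp (2 * (eta + eta0)) in
  (4 * p * Tp + E * Tm * (2 * p * p1 - p2 - kb_b))
  / (4 * Tp + E * Tm * (kb_c + 2 * p1 - 2 * p ^ 2)).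

Definition kb_xi (x t : R) : R := x + kb_c * t.
Definition kb_eta (x t : R) : R := kb_s0 * (x + kb_cb * t).

End KB.

Definition c2_z1 (al : R) : R := 1.
Definition c2_z2 (al : R) : R := sech (2 * al).
Definition c2_z3 (al : R) : R := sech (2 * al).
Definition c2_nu (al : R) : R := tanh (2 * al).

Definition kink_breather_k1 (al eta0 xi0 x t : R) : R :=
  let z1 := c2_z1 al in let z2 := c2_z2 al in let z3 := c2_z3 al in
  let nu := c2_nu al in
  kb_formula z1 z2 z3 nu al eta0
    (kb_xi z1 z2 z3 x t + xi0) (kb_eta z1 z2 z3 nu al x t).

Definition two_soliton_formula (al xi eta : R) : R :=
  let z := tanh (2 * al) * xi in
  (sinh (eta + 2 * al) * exp (- 2 * z) + sinh (eta - 2 * al) * exp (2 * z)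
     + 2 * sinh eta * (1 - (sinh (2 * al)) ^ 2) * sech (2 * al))
  / (cosh (eta + 2 * al) * exp (- 2 * z) + cosh (eta - 2 * al) * exp (2 * z)
     + 2 * cosh eta * cosh (2 * al)).

Definition ts_xi (al x t : R) : R := x + 2 * t + 4 * (sech (2 * al)) ^ 2 * t.
Definition ts_eta (x t : R) : R := x + 2 * t.

From Stdlib Require Import Reals Lra FunctionalExtensionality.
From Coquelicot Require Import Coquelicot.
Open Scope R_scope.

(* At k = 1 the profile is phi(x) = P(nu x) / Q(nu x) with
   P(y) = cosh 2y + (1 - sinh^2 2al) sech 2al and
   Q(y) = cosh 2y + cosh 2al = 2 cosh(y + al) cosh(y - al), and s0 = 1, so eta = x + 2t.
   The two differential expressions of the kink-breather formula factor:
     cosh^2(y - al) (c + 2 phi' - 2 phi^2) = 4 cosh(y + al) cosh(y - 3al) / cosh^2 2al,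
     cosh^3(y - al) (2 phi phi' - phi'' - b) = -2 cosh(y + al) P(y - 2al) / cosh^2 2al.
   Cancelling the common factor 2 cosh(y + al) / cosh(y - al), the breather becomes
   (P(y) - w P(y - 2al)) / (Q(y) + w Q(y - 2al)) with y = nu xi, w = e^(2(eta + eta0)) / cosh^2 2al,
   while the two-soliton formula is minus the same quotient at y = nu xi + al, w = e^(2 eta).
   So the two agree up to the symmetry u |-> -u of mKdV and the shifts
   xi |-> xi - al / nu, eta |-> eta + eta0 - ln cosh 2al. *)

Lemma exp_minus u v : exp (u - v) = exp u / exp v.
Proof. unfold Rminus, Rdiv; rewrite exp_plus, exp_Ropp; reflexivity. Qed.

Lemma exp_double u : exp (2 * u) = exp u * exp u.
Proof. rewrite <- exp_plus; f_equal; ring. Qed.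

Lemma exp_triple u : exp (3 * u) = exp u * exp u * exp u.
Proof. rewrite <- !exp_plus; f_equal; ring. Qed.

Lemma exp_neg_double u : exp (-2 * u) = / (exp u * exp u).
Proof. rewrite <- exp_double, <- exp_Ropp; f_equal; ring. Qed.

Ltac hyperbolic_to_exp :=
  unfold tanh, sech, cosh, sinh;
  repeat (rewrite exp_Ropp || rewrite exp_neg_double || rewrite exp_double
          || rewrite exp_triple || rewrite exp_minus || rewrite exp_plus).

Ltac pos_nonzero :=
  repeat split; apply Rgt_not_eq;
  repeat (assumption || apply Rplus_lt_0_compat || apply Rmult_lt_0_compat
          || apply Rinv_0_lt_compat || apply Rdiv_lt_0_compat || apply pow_lt || lra).

Lemma cosh_ge_1 u : 1 <= cosh u.
Proof.
  unfold cosh; rewrite exp_Ropp; pose proof (exp_pos u) as Hu.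
  assert (Hsq : 0 <= (exp u - 1) ^ 2) by apply pow2_ge_0.
  apply (Rmult_le_reg_r (2 * exp u)); [lra|].
  field_simplify; [nra | lra].
Qed.

Lemma cosh_pos u : 0 < cosh u.
Proof. pose proof (cosh_ge_1 u); lra. Qed.

Lemma sinh_sq u : sinh u ^ 2 = cosh u ^ 2 - 1.
Proof. hyperbolic_to_exp; pose proof (exp_pos u); field; pos_nonzero. Qed.

Lemma tanh_sq u : tanh u ^ 2 = (cosh (2 * u) - 1) / (cosh (2 * u) + 1).
Proof. hyperbolic_to_exp; pose proof (exp_pos u); field; pos_nonzero. Qed.

Lemma tanh_pos u : 0 < u -> 0 < tanh u.
Proof.
  intro Hu; unfold tanh.
  pose proof (sinh_lt 0 u Hu) as Hs; rewrite sinh_0 in Hs.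
  apply Rdiv_lt_0_compat; [exact Hs | apply cosh_pos].
Qed.

Lemma exp_double_sub_ln u c : 0 < c -> exp (2 * (u - ln c)) = exp (2 * u) / c ^ 2.
Proof. intro Hc; rewrite !exp_double, exp_minus, exp_ln by exact Hc; field; lra. Qed.

Definition profile_num (al y : R) : R := cosh (2 * y) + (1 - sinh (2 * al) ^ 2) * sech (2 * al).
Definition profile_den (al y : R) : R := cosh (2 * y) + cosh (2 * al).
Definition profile (al y : R) : R := profile_num al y / profile_den al y.
Definition profile_d1 (al y : R) : R :=
  4 * sinh (2 * al) ^ 2 * sinh (2 * y) / (cosh (2 * al) * profile_den al y ^ 2).
Definition profile_d2 (al y : R) : R :=
  8 * sinh (2 * al) ^ 2 * (cosh (2 * y) * profile_den al y - 2 * sinh (2 * y) ^ 2)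
  / (cosh (2 * al) * profile_den al y ^ 3).

Definition profile_quotient (al y w : R) : R :=
  (profile_num al y - w * profile_num al (y - 2 * al))
  / (profile_den al y + w * profile_den al (y - 2 * al)).

Lemma profile_den_pos al y : 0 < profile_den al y.
Proof. unfold profile_den; pose proof (cosh_pos (2 * y)); pose proof (cosh_pos (2 * al)); lra. Qed.

Lemma profile_den_cosh al y : profile_den al y = 2 * cosh (y + al) * cosh (y - al).
Proof.
  unfold profile_den; hyperbolic_to_exp.
  pose proof (exp_pos y); pose proof (exp_pos al).
  field; pos_nonzero.
Qed.

Lemma is_derive_profile al y : is_derive (profile al) y (profile_d1 al y).
Proof.
  pose proof (profile_den_pos al y) as HQ; pose proof (cosh_pos (2 * al)).
  unfold profile, profile_d1, profile_num, profile_den, sech in *.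
  auto_derive; [lra|].
  hyperbolic_to_exp.
  pose proof (exp_pos y); pose proof (exp_pos al).
  field; pos_nonzero.
Qed.

Lemma is_derive_profile_d1 al y : is_derive (profile_d1 al) y (profile_d2 al y).
Proof.
  pose proof (profile_den_pos al y) as HQ; pose proof (cosh_pos (2 * al)).
  unfold profile_d1, profile_d2, profile_den in *.
  auto_derive; [pos_nonzero |].
  field; pos_nonzero.
Qed.

Lemma two_soliton_formula_quotient al xi eta :
  two_soliton_formula al xi eta = - profile_quotient al (tanh (2 * al) * xi + al) (exp (2 * eta)).
Proof.
  unfold two_soliton_formula, profile_quotient, profile_num, profile_den.
  set (z := tanh (2 * al) * xi).
  replace (z + al - 2 * al) with (z - al) by ring.
  hyperbolic_to_exp.
  pose proof (exp_pos z); pose proof (exp_pos al); pose proof (exp_pos eta).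
  field; pos_nonzero.
Qed.

Section KinkBreatherK1.

Variable al : R.
Let z1 := c2_z1 al.
Let z2 := c2_z2 al.
Let z3 := c2_z3 al.
Let nu := c2_nu al.

Lemma kb_phi_k1 : kb_phi z1 z2 z3 nu = fun x => profile al (nu * x).
Proof.
  apply functional_extensionality; intro x.
  unfold kb_phi, profile, profile_num, profile_den, z1, z2, z3, c2_z1, c2_z2, c2_z3.
  rewrite tanh_sq, sinh_sq.
  pose proof (cosh_ge_1 (2 * (nu * x))); pose proof (cosh_ge_1 (2 * al)).
  unfold sech; field; repeat split; nra.
Qed.

Lemma Derive_kb_phi_k1 x : Derive (kb_phi z1 z2 z3 nu) x = nu * profile_d1 al (nu * x).
Proof.
  rewrite kb_phi_k1; apply is_derive_unique.
  apply (is_derive_comp (profile al) (fun x => nu * x)); [apply is_derive_profile|].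
  auto_derive; [exact I | ring].
Qed.

Lemma Derive2_kb_phi_k1 x :
  Derive (Derive (kb_phi z1 z2 z3 nu)) x = nu ^ 2 * profile_d2 al (nu * x).
Proof.
  rewrite (functional_extensionality _ _ Derive_kb_phi_k1); apply is_derive_unique.
  replace (nu ^ 2 * _) with (nu * (nu * profile_d2 al (nu * x))) by ring.
  apply (is_derive_comp (fun y => nu * profile_d1 al y) (fun x => nu * x)).
  - apply is_derive_scal, is_derive_profile_d1.
  - auto_derive; [exact I | ring].
Qed.

Lemma kb_s0_k1 : kb_s0 z1 z2 z3 nu al = 1.
Proof.
  unfold kb_s0, z1, z2, z3, nu, c2_z1, c2_z2, c2_z3, c2_nu.
  hyperbolic_to_exp.
  pose proof (exp_pos al).
  field; pos_nonzero.
Qed.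

Lemma kb_xi_k1 x t : kb_xi z1 z2 z3 x t = ts_xi al x t.
Proof. unfold kb_xi, kb_c, ts_xi, z1, z2, z3, c2_z1, c2_z2, c2_z3; ring. Qed.

Lemma kb_eta_k1 x t : kb_eta z1 z2 z3 nu al x t = ts_eta x t.
Proof.
  unfold kb_eta, kb_cb; rewrite kb_s0_k1.
  unfold kb_c, kb_b, ts_eta, z1, z2, z3, c2_z1, c2_z2, c2_z3; field.
Qed.

Lemma kb_den_factor_k1 y :
  cosh (y - al) ^ 2 * (kb_c z1 z2 z3 + 2 * (nu * profile_d1 al y) - 2 * profile al y ^ 2)
  = 4 * cosh (y + al) * cosh (y - 3 * al) / cosh (2 * al) ^ 2.
Proof.
  unfold kb_c, profile, profile_d1, profile_num, profile_den, z1, z2, z3, nu,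
    c2_z1, c2_z2, c2_z3, c2_nu.
  hyperbolic_to_exp.
  pose proof (exp_pos y); pose proof (exp_pos al).
  field; pos_nonzero.
Qed.

Lemma kb_num_factor_k1 y :
  cosh (y - al) ^ 3
  * (2 * profile al y * (nu * profile_d1 al y) - nu ^ 2 * profile_d2 al y - kb_b z1 z2 z3)
  = - 2 * cosh (y + al) * profile_num al (y - 2 * al) / cosh (2 * al) ^ 2.
Proof.
  unfold kb_b, profile, profile_d1, profile_d2, profile_num, profile_den, z1, z2, z3, nu,
    c2_z1, c2_z2, c2_z3, c2_nu.
  hyperbolic_to_exp.
  pose proof (exp_pos y); pose proof (exp_pos al).
  field; pos_nonzero.
Qed.

Lemma kb_formula_k1 eta0 xi eta :
  kb_formula z1 z2 z3 nu al eta0 xi eta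
  = profile_quotient al (nu * xi) (exp (2 * (eta + eta0)) / cosh (2 * al) ^ 2).
Proof.
  unfold kb_formula; cbv zeta.
  rewrite Derive2_kb_phi_k1, Derive_kb_phi_k1, kb_phi_k1; cbv beta.
  unfold kb_Theta, profile_quotient; set (y := nu * xi).
  pose proof (cosh_pos (y + al)); pose proof (cosh_pos (y - al));
    pose proof (cosh_pos (y - 3 * al)); pose proof (cosh_pos (2 * al));
    pose proof (exp_pos (2 * (eta + eta0))).
  assert (Hc : kb_c z1 z2 z3 + 2 * (nu * profile_d1 al y) - 2 * profile al y ^ 2
               = 4 * cosh (y + al) * cosh (y - 3 * al) / cosh (2 * al) ^ 2 / cosh (y - al) ^ 2).
  { rewrite <- kb_den_factor_k1; field; lra. }
  assert (Hb : 2 * profile al y * (nu * profile_d1 al y) - nu ^ 2 * profile_d2 al y - kb_b z1 z2 z3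
               = - 2 * cosh (y + al) * profile_num al (y - 2 * al) / cosh (2 * al) ^ 2
                 / cosh (y - al) ^ 3).
  { rewrite <- kb_num_factor_k1; field; lra. }
  assert (Hden : profile_den al (y - 2 * al) = 2 * cosh (y - al) * cosh (y - 3 * al)).
  { rewrite profile_den_cosh; f_equal; [f_equal|]; f_equal; ring. }
  rewrite Hc, Hb; unfold profile; rewrite Hden, profile_den_cosh.
  field; pos_nonzero.
Qed.

Lemma kb_formula_k1_two_soliton eta0 xi eta : 0 < al ->
  kb_formula z1 z2 z3 nu al eta0 xi eta
  = - two_soliton_formula al (xi - al / nu) (eta + eta0 - ln (cosh (2 * al))).
Proof.
  intro Hal.
  assert (Hnu : 0 < nu) by (apply tanh_pos; lra).
  rewrite kb_formula_k1, two_soliton_formula_quotient, Ropp_involutive, exp_double_sub_ln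
    by apply cosh_pos.
  f_equal; change (tanh (2 * al)) with nu; field; lra.
Qed.

End KinkBreatherK1.

Lemma kink_breather_k1_two_soliton al eta0 xi0 x t : 0 < al ->
  kink_breather_k1 al eta0 xi0 x t
  = - two_soliton_formula al (ts_xi al x t + (xi0 - al / c2_nu al))
                             (ts_eta x t + (eta0 - ln (cosh (2 * al)))).
Proof.
  intro Hal; unfold kink_breather_k1; cbv zeta.
  rewrite kb_xi_k1, kb_eta_k1, kb_formula_k1_two_soliton by exact Hal.
  f_equal; f_equal; ring.
Qed.

Theorem corollary2 (al : R) (hal : 0 < al) :
  exists sg : R, (sg = 1 \/ sg = -1) /\
    (forall eta0 : R, exists xi1 eta1 : R, forall x t : R,
       kink_breather_k1 al eta0 0 x t
       = sg * two_soliton_formula al (ts_xi al x t + xi1) (ts_eta x t + eta1)) /\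
    (forall xi1 eta1 : R, exists eta0 xi0 : R, forall x t : R,
       kink_breather_k1 al eta0 xi0 x t
       = sg * two_soliton_formula al (ts_xi al x t + xi1) (ts_eta x t + eta1)).
Proof.
  exists (-1); split; [right; reflexivity | split].
  - intro eta0; exists (0 - al / c2_nu al), (eta0 - ln (cosh (2 * al))); intros x t.
    rewrite kink_breather_k1_two_soliton by exact hal; ring.
  - intros xi1 eta1; exists (eta1 + ln (cosh (2 * al))), (xi1 + al / c2_nu al); intros x t.
    rewrite kink_breather_k1_two_soliton, !Rplus_minus_r by exact hal; ring.
Qed.
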